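(* Let $A \in \mathcal{C}_n$ and let $I \subset \{1,\dots,n\}$ be an index set such that the principal submatrix $A_I$ is positive definite. Let $u^1,\dots,u^m$ be zeros of $A$ such that for each $l=1,\dots,m$ the set $\operatorname{Supp}(u^l)\setminus I = \{k^l\}$ consists of exactly one element, and normalize $u^l$ so that $u^l_{k^l}=1$. Suppose the normalized zeros $u^1,\dots,u^m$ are mutually different, and suppose that $\operatorname{Supp}(u^r_I) \subset \operatorname{Supp}(u^{r+1}_I)$ for all $r=1,\dots,m-1$. Then the indices $k^1,\dots,k^m$ are mutually different and $u^1,\dots,u^m$ are minimal zeros of $A$. Moreover, if $v$ is a zero of $A$ with $\operatorname{Supp}(v) \subset I \cup \{k^1,\dots,k^m\}$, then $v = \sum_{i=1}^m \alpha_i u^i$ for some nonnegative scalars $\alpha_i$. If in addition $v$ is a minimal zero, then there exist $l \in \{1,\dots,m\}$ and $\alpha>0$ with $v = \alpha u^l$.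
   Context: $\mathcal{C}_n$ denotes the cone of copositive matrices: real symmetric $n\times n$ matrices $A$ with $x^TAx\ge 0$ for all $x\in\mathbb{R}^n_+$. For $A\in\mathcal{C}_n$, a zero of $A$ is a nonzero vector $u\in\mathbb{R}^n_+$ with $u^TAu=0$. The support of $u\in\mathbb{R}^n$ is $\operatorname{Supp}(u)=\{i : u_i\neq 0\}$. A zero $u$ of $A$ is minimal if there is no zero $v$ of $A$ with $\operatorname{Supp}(v)\subsetneq\operatorname{Supp}(u)$. For $I\subset\{1,\dots,n\}$, $A_I=(A_{ij})_{i,j\in I}$ is the principal submatrix and $u_I=(u_i)_{i\in I}$ the subvector. *)

From HB Require Import structures.
From mathcomp Require Import all_boot all_order all_algebra.
Set Implicit Arguments. Unset Strict Implicit. Unset Printing Implicit Defensive.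
Import Order.TTheory GRing.Theory Num.Theory.
Local Open Scope ring_scope.

Section Copositive.
Variable R : realFieldType.

Definition qform (n : nat) (A : 'M[R]_n) (x : 'cV[R]_n) : R :=
  (x^T *m A *m x) 0 0.

Definition nonneg_vec (n : nat) (x : 'cV[R]_n) : Prop :=
  forall i, 0 <= x i 0.

Definition copositive (n : nat) (A : 'M[R]_n) : Prop :=
  A^T = A /\ (forall x : 'cV[R]_n, nonneg_vec x -> 0 <= qform A x).

Definition supp (n : nat) (x : 'cV[R]_n) : {set 'I_n} :=
  [set i | x i 0 != 0].

(* Supp(u_I), identified with a subset of I (indices of u_I are indices in I) *)
Definition supp_sub (n : nat) (x : 'cV[R]_n) (I : {set 'I_n}) : {set 'I_n} :=
  supp x :&: I.

Definition is_zero_of (n : nat) (A : 'M[R]_n) (u : 'cV[R]_n) : Prop :=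
  nonneg_vec u /\ u != 0 /\ qform A u = 0.

Definition minimal_zero (n : nat) (A : 'M[R]_n) (u : 'cV[R]_n) : Prop :=
  is_zero_of A u /\
  ~ (exists v : 'cV[R]_n, is_zero_of A v /\ supp v \proper supp u).

Definition principal_submx (n : nat) (A : 'M[R]_n) (I : {set 'I_n})
  : 'M[R]_#|I| :=
  \matrix_(i < #|I|, j < #|I|) A (enum_val i) (enum_val j).

Definition posdef (k : nat) (M : 'M[R]_k) : Prop :=
  M^T = M /\ (forall x : 'cV[R]_k, x != 0 -> 0 < qform M x).

End Copositive.

From HB Require Import structures.
From mathcomp Require Import all_boot all_order all_algebra.
From mathcomp Require Import ring lra.
Import Order.TTheory GRing.Theory Num.Theory.
Local Open Scope ring_scope.

(* Three general facts about a copositive A drive the argument: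
   - a zero u is a local minimizer of x |-> x^T A x on the orthant, hence the
     "gradient" A u is nonnegative and vanishes on Supp(u)   [zero_gradient];
   - a vector supported in I with x^T A x <= 0 is zero, as A_I is positive
     definite                                                 [posdef_block_eq0];
   - consequently two zeros u, w which agree outside I and such that A u
     vanishes on Supp(w) coincide, by expanding (u-w)^T A (u-w)
                                                              [zero_eq_off_block].
   For the chain u^1, ..., u^m the support inclusions make A u^l' vanish on
   Supp(u^l_I) for l <= l'.  This yields injectivity of k and minimality of
   each u^l by the third fact.  For a zero v supported in I u {k^l}, put
   w = sum_l v_(k^l) u^l; then v - w is supported in I and a bound on the Gram
   entries (u^l)^T A u^l' shows (v-w)^T A (v-w) <= 0, so v = w.  If v is
   moreover minimal, only one coefficient can be nonzero. *)

Section Bilinear.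
Variables (R : realFieldType) (n : nat).
Implicit Types (A : 'M[R]_n) (x y z : 'cV[R]_n).

Definition bil A x y : R := (x^T *m A *m y) 0 0.

Lemma bilE A x y : bil A x y = \sum_i x i 0 * (A *m y) i 0.
Proof. by rewrite /bil -mulmxA mxE; apply: eq_bigr => i _; rewrite mxE. Qed.

Lemma qform_bil A x : qform A x = bil A x x.
Proof. by []. Qed.

Lemma bilDl A x y z : bil A (x + y) z = bil A x z + bil A y z.
Proof. by rewrite !bilE -big_split; apply: eq_bigr => i _; rewrite !mxE mulrDl. Qed.

Lemma bilDr A x y z : bil A x (y + z) = bil A x y + bil A x z.
Proof. by rewrite /bil mulmxDr mxE. Qed.

Lemma bilNl A x y : bil A (- x) y = - bil A x y.
Proof. by rewrite /bil linearN /= !mulNmx mxE. Qed.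

Lemma bilNr A x y : bil A x (- y) = - bil A x y.
Proof. by rewrite /bil mulmxN mxE. Qed.

Lemma bilZl A c x y : bil A (c *: x) y = c * bil A x y.
Proof. by rewrite !bilE mulr_sumr; apply: eq_bigr => i _; rewrite !mxE mulrA. Qed.

Lemma bilZr A c x y : bil A x (c *: y) = c * bil A x y.
Proof. by rewrite /bil -scalemxAr mxE. Qed.

Lemma bil_suml A m (a : 'I_m -> R) (v : 'I_m -> 'cV[R]_n) y :
  bil A (\sum_l a l *: v l) y = \sum_l a l * bil A (v l) y.
Proof.
apply: (big_ind2 (fun x s => bil A x y = s)) => [|x s x' s' <- <-|l _].
- by rewrite bilE big1 // => i _; rewrite mxE mul0r.
- exact: bilDl.
- exact: bilZl.
Qed.

Lemma bil_sumr A m (a : 'I_m -> R) (v : 'I_m -> 'cV[R]_n) x :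
  bil A x (\sum_l a l *: v l) = \sum_l a l * bil A x (v l).
Proof.
rewrite /bil mulmx_sumr summxE; apply: eq_bigr => l _.
by rewrite -scalemxAr mxE.
Qed.

Lemma bil_sym A x y : A^T = A -> bil A x y = bil A y x.
Proof.
move=> symA; have e : (x^T *m A *m y)^T = y^T *m A *m x.
  by rewrite !trmx_mul trmxK symA mulmxA.
by rewrite /bil -e [in RHS]mxE.
Qed.

Lemma bil_delta A i y : bil A (delta_mx i 0) y = (A *m y) i 0.
Proof.
rewrite bilE (bigD1 i) //= mxE !eqxx mul1r big1 ?addr0 // => l /negbTE hl.
by rewrite mxE hl mul0r.
Qed.

Lemma qformB A x y : A^T = A ->
  qform A (x - y) = qform A x - (bil A y x) *+ 2 + qform A y.
Proof.
move=> symA; rewrite !qform_bil bilDl !bilDr !bilNl !bilNr.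
by rewrite (bil_sym _ x y symA); ring.
Qed.

Lemma qform_shift A x i t : A^T = A ->
  qform A (x + t *: delta_mx i 0) =
  qform A x + t * ((A *m x) i 0 *+ 2 + t * A i i).
Proof.
move=> symA; rewrite !qform_bil bilDl !bilDr !bilZl !bilZr.
rewrite (bil_sym _ x _ symA) !bil_delta.
have -> : (A *m delta_mx i (0 : 'I_1)) i 0 = A i i.
  rewrite mxE (bigD1 i) //= mxE !eqxx mulr1 big1 ?addr0 // => j /negbTE hj.
  by rewrite mxE hj mulr0.
ring.
Qed.

End Bilinear.
Arguments bil {R n}.

(* Elementary facts on the one-variable polynomials t * (2c + t a) arising
   when a zero is moved along a coordinate axis. *)
Section Slope.
Variable R : realFieldType.

Lemma slope_ge0 (c a : R) :
  (forall t, 0 <= t -> 0 <= t * (c *+ 2 + t * a)) -> 0 <= c.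
Proof.
move=> h; rewrite leNgt; apply/negP => c_lt0.
have [a_le0|a_gt0] := lerP a 0; first by have := h 1 ler01; lra.
have t_gt0 : 0 < - c / a by rewrite divr_gt0 // oppr_gt0.
have := h _ (ltW t_gt0); rewrite mulrC divfK ?gt_eqF // => h'.
nra.
Qed.

Lemma slope_le0 (x c a : R) : 0 < x ->
  (forall t, - x <= t -> t <= 0 -> 0 <= t * (c *+ 2 + t * a)) -> c <= 0.
Proof.
move=> x_gt0 h; rewrite leNgt; apply/negP => c_gt0.
have xa_ge : c *+ 2 <= x * a.
  have := h (- x) (lexx _) _; rewrite oppr_le0 => /(_ (ltW x_gt0)); nra.
have a_gt0 : 0 < a by rewrite -(pmulr_rgt0 _ x_gt0); lra.
have s_gt0 : 0 < c / a by rewrite divr_gt0.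
have s_le : c / a <= x by rewrite ler_pdivrMr //; lra.
have sa : c / a * a = c by rewrite divfK ?gt_eqF.
have := h (- (c / a)); rewrite lerN2 oppr_le0 => /(_ s_le (ltW s_gt0)); nra.
Qed.

End Slope.

Lemma zero_gradient {R : realFieldType} {n} {A : 'M[R]_n} {u} i :
  copositive A -> is_zero_of A u ->
  0 <= (A *m u) i 0 /\ (u i 0 != 0 -> (A *m u) i 0 = 0).
Proof.
move=> [symA copA] [u_ge0 [_ qu0]].
have shift t : 0 <= u i 0 + t -> 0 <= t * ((A *m u) i 0 *+ 2 + t * A i i).
  move=> ht; have nn : nonneg_vec (u + t *: delta_mx i 0).
    move=> j; rewrite !mxE; case: (eqVneq j i) => [->|_] /=.
      by rewrite mulr1.
    by rewrite mulr0 addr0.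
  by have := copA _ nn; rewrite qform_shift // qu0 add0r.
have grad_ge0 : 0 <= (A *m u) i 0.
  by apply: slope_ge0 => t t_ge0; apply: shift; rewrite addr_ge0.
split=> // ui_neq0; apply/eqP; rewrite eq_le grad_ge0 andbT.
apply: (@slope_le0 _ (u i 0)) => [|t ht _]; last by apply: shift; lra.
by rewrite lt_def ui_neq0 u_ge0.
Qed.

Section Block.
Variables (R : realFieldType) (n : nat) (A : 'M[R]_n) (I : {set 'I_n}).

Definition supported_in (d : 'cV[R]_n) : Prop := forall i, i \notin I -> d i 0 = 0.

Definition restrict (d : 'cV[R]_n) : 'cV[R]_#|I| := \col_j d (enum_val j) 0.

Lemma sum_over_block (F : 'I_n -> R) :
  (forall i, i \notin I -> F i = 0) -> \sum_i F i = \sum_(j < #|I|) F (enum_val j).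
Proof.
move=> F0; rewrite (bigID (mem I)) /= [X in _ + X]big1 ?addr0; last exact: F0.
exact: big_enum_val.
Qed.

Lemma qform_restrict d : supported_in d ->
  qform A d = qform (principal_submx A I) (restrict d).
Proof.
move=> dI; rewrite qform_bil bilE /qform -mulmxA mxE sum_over_block; last first.
  by move=> i /dI ->; rewrite mul0r.
apply: eq_bigr => j _; rewrite !mxE sum_over_block; last first.
  by move=> i /dI ->; rewrite mulr0.
by congr (_ * _); apply: eq_bigr => j' _; rewrite !mxE.
Qed.

Lemma restrict_eq0 d : supported_in d -> restrict d = 0 -> d = 0.
Proof.
move=> dI /matrixP d0; apply/matrixP => i j; rewrite (ord1 j) [RHS]mxE.
have [iI|/dI //] := boolP (i \in I).
by have := d0 (enum_rank_in iI i) 0; rewrite !mxE enum_rankK_in.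
Qed.

Lemma posdef_block_eq0 d : posdef (principal_submx A I) ->
  supported_in d -> qform A d <= 0 -> d = 0.
Proof.
move=> [_ pdAI] dI qd_le0; apply: restrict_eq0 => //; apply/eqP.
apply: contraTT qd_le0 => /pdAI; rewrite -qform_restrict // => qd_gt0.
by rewrite -ltNge.
Qed.

End Block.
Arguments supported_in {R n} I d.
Arguments posdef_block_eq0 {R n A I d}.

(* Uniqueness of zeros relative to the block I: if u and w are zeros of A
   agreeing outside I and A u vanishes on the support of w, then u = w, since
   (u - w)^T A (u - w) = - 2 w^T A u = 0 and u - w is supported in I. *)
Lemma zero_eq_off_block {R : realFieldType} {n} {A : 'M[R]_n} {I : {set 'I_n}}
    {u w : 'cV[R]_n} :
  copositive A -> posdef (principal_submx A I) ->
  qform A u = 0 -> qform A w = 0 ->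
  (forall i, w i 0 != 0 -> (A *m u) i 0 = 0) ->
  (forall i, i \notin I -> u i 0 = w i 0) -> u = w.
Proof.
move=> [symA _] pdAI qu0 qw0 grad0 uw.
have bwu : bil A w u = 0.
  rewrite bilE big1 // => i _.
  by have [->|/grad0 ->] := eqVneq (w i 0) 0; rewrite ?mul0r ?mulr0.
apply/eqP; rewrite -subr_eq0; apply/eqP; apply: (posdef_block_eq0 pdAI).
  by move=> i /uw; rewrite !mxE => ->; rewrite subrr.
by rewrite qformB // qu0 qw0 bwu; lra.
Qed.

Lemma chain_subset {T : finType} {m} {S : 'I_m -> {set T}} :
  (forall r s : 'I_m, val s = (val r).+1 -> S r \subset S s) ->
  forall r s : 'I_m, (r <= s)%N -> S r \subset S s.
Proof.
move=> step r s /subnKC; move: (val s - val r)%N => d.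
elim: d s => [|d IH] s /= s_eq.
  by have -> : s = r by apply: val_inj; rewrite /= -s_eq addn0.
have s'_lt : (r + d < m)%N by have := ltn_ord s; rewrite -s_eq addnS; apply: ltnW.
apply: subset_trans (IH (Ordinal s'_lt) erefl) (step _ _ _).
by rewrite /= -s_eq addnS.
Qed.

Lemma sum_symmetrize (R : comNzRingType) m (a : 'I_m -> R) (F : 'I_m -> 'I_m -> R) :
  \sum_l a l * \sum_l' a l' * (F l' l + F l l') =
  (\sum_l a l * \sum_l' a l' * F l l') *+ 2.
Proof.
have swap : \sum_l a l * \sum_l' a l' * F l' l = \sum_l a l * \sum_l' a l' * F l l'.
  under eq_bigr do rewrite mulr_sumr; rewrite exchange_big /=.
  by apply: eq_bigr => l _; rewrite mulr_sumr; apply: eq_bigr => l' _; ring.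
rewrite mulr2n -[X in X + _]swap -big_split /=.
by apply: eq_bigr => l _; rewrite -mulrDr -big_split /=; under eq_bigr do rewrite mulrDr.
Qed.

Section ZeroChain.
Variables (R : realFieldType) (n m : nat) (A : 'M[R]_n) (I : {set 'I_n}).
Variables (u : 'I_m -> 'cV[R]_n) (k : 'I_m -> 'I_n).
Hypothesis copA : copositive A.
Hypothesis pdAI : posdef (principal_submx A I).
Hypothesis u_zero : forall l, is_zero_of A (u l).
Hypothesis u_supp : forall l, supp (u l) :\: I = [set k l].
Hypothesis u_k : forall l, u l (k l) 0 = 1.
Hypothesis u_chain : forall r s : 'I_m, val s = (val r).+1 ->
  supp_sub (u r) I \subset supp_sub (u s) I.

Lemma u_ge0 l i : 0 <= u l i 0.
Proof. by case: (u_zero l) => /(_ i). Qed.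

Lemma k_notin_block l : k l \notin I.
Proof.
by have := set11 (k l); rewrite -u_supp in_setD => /andP [].
Qed.

Lemma u_support {l i} : u l i 0 != 0 -> i \in I \/ i = k l.
Proof.
move=> uli; have [iI|iI] := boolP (i \in I); [by left | right].
have : i \in supp (u l) :\: I by rewrite in_setD iI inE.
by rewrite u_supp in_set1 => /eqP.
Qed.

Lemma u_vanish l i : i \notin I -> i != k l -> u l i 0 = 0.
Proof.
move=> iI ik; apply/eqP; apply: contraNT iI => /u_support [//|eik].
by rewrite eik eqxx in ik.
Qed.

Lemma grad_vanish_chain {l l' : 'I_m} {i} : (l <= l')%N ->
  i \in I -> u l i 0 != 0 -> (A *m u l') i 0 = 0.
Proof.
move=> le iI uli; apply: (zero_gradient _ copA (u_zero l')).2.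
have := subsetP (chain_subset u_chain l l' le) i.
by rewrite !in_setI !inE uli iI => /(_ isT) /andP [].
Qed.

(* The indices k^l are distinct: for r <= s with k^r = k^s the zeros u^r
   and u^s agree outside I, hence coincide. *)
Lemma k_inj : injective u -> injective k.
Proof.
move=> u_inj r s krs.
wlog le_rs : r s krs / (r <= s)%N.
  by move=> H; case: (leqP r s) => [|/ltnW] ?; [|apply/esym]; apply: H.
apply/esym/u_inj; apply: (zero_eq_off_block copA pdAI).
- by case: (u_zero s) => _ [].
- by case: (u_zero r) => _ [].
- move=> i uri; have [iI|->] := u_support uri; first exact: grad_vanish_chain le_rs iI uri.
  by apply: (zero_gradient _ copA (u_zero s)).2; rewrite krs u_k oner_neq0.
- move=> i iI; have [->|iks] := eqVneq i (k s); first by rewrite u_k -krs u_k.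
  by rewrite !u_vanish // krs.
Qed.

(* Each u^l is a minimal zero: a zero v with smaller support is nonzero at
   k^l (else v = 0 by positive definiteness), and then v / v_(k^l) = u^l. *)
Lemma u_minimal l : minimal_zero A (u l).
Proof.
split=> [|[v [[_ [v_neq0 qv0]] /properP [supp_vu [i0 ui0 vi0]]]]].
  exact: u_zero.
have v_u i : v i 0 != 0 -> u l i 0 != 0.
  by move=> vi; have := subsetP supp_vu i; rewrite !inE; apply.
have v_vanish i : i \notin I -> i != k l -> v i 0 = 0.
  move=> iI ik; apply/eqP; apply: contraNT iI => /v_u /u_support [//|eik].
  by rewrite eik eqxx in ik.
have [vk0|vk_neq0] := eqVneq (v (k l) 0) 0.
  move/negP: v_neq0; apply; apply/eqP; apply: posdef_block_eq0 pdAI _ _.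
    by move=> i iI; have [->|] := eqVneq i (k l); last exact: v_vanish.
  by rewrite qv0.
have ul_eq : u l = (v (k l) 0)^-1 *: v.
  apply: (zero_eq_off_block copA pdAI).
  - by case: (u_zero l) => _ [].
  - by rewrite qform_bil bilZl bilZr -qform_bil qv0 !mulr0.
  - move=> i; rewrite mxE mulf_eq0 negb_or => /andP [_ /v_u].
    exact: (zero_gradient _ copA (u_zero l)).2.
  move=> i iI; rewrite mxE; have [->|ik] := eqVneq i (k l).
    by rewrite u_k mulVf.
  by rewrite u_vanish // (v_vanish i iI ik) mulr0.
by move: ui0 vi0; rewrite ul_eq !inE mxE mulf_eq0 negb_or => /andP [_ ->].
Qed.

Definition kgrad l l' : R := (A *m u l) (k l') 0.

Lemma kgrad_ge0 l l' : 0 <= kgrad l l'.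
Proof. exact: (zero_gradient _ copA (u_zero l)).1. Qed.

(* Gram entries along the chain: (u^l)^T A u^l' = (A u^l')_(k^l) for l <= l',
   because A u^l' vanishes on the block part of Supp(u^l). *)
Lemma gram_chain (l l' : 'I_m) : (l <= l')%N -> bil A (u l) (u l') = kgrad l' l.
Proof.
move=> le; rewrite bilE (bigD1 (k l)) //= u_k mul1r big1 ?addr0 // => i ik.
have [->|uli] := eqVneq (u l i 0) 0; first by rewrite mul0r.
have [iI|eik] := u_support uli; last by rewrite eik eqxx in ik.
by rewrite (grad_vanish_chain le iI uli) mulr0.
Qed.

Lemma gram_le l l' : bil A (u l) (u l') <= kgrad l' l + kgrad l l'.
Proof.
have [/gram_chain ->|/ltnW/gram_chain] := leqP l l'; first by rewrite lerDl kgrad_ge0.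
by rewrite bil_sym ?copA.1 // => ->; rewrite lerDr kgrad_ge0.
Qed.

Lemma qform_comb_le (a : 'I_m -> R) : (forall l, 0 <= a l) ->
  qform A (\sum_l a l *: u l) <= (\sum_l a l * \sum_l' a l' * kgrad l l') *+ 2.
Proof.
move=> a_ge0; rewrite -sum_symmetrize qform_bil bil_suml.
apply: ler_sum => l _; rewrite bil_sumr ler_wpM2l //.
by apply: ler_sum => l' _; rewrite ler_wpM2l ?gram_le.
Qed.

Hypothesis u_inj : injective u.

Lemma u_at_k l l' : u l (k l') 0 = (l == l')%:R.
Proof.
have [->|neq] := eqVneq l l'; first exact: u_k.
apply/eqP; apply: contraNT (k_notin_block l') => /u_support [//|/(k_inj u_inj) e].
by rewrite e eqxx in neq.
Qed.

(* Keeping only the indices k^l' in x^T A u^l, all terms being nonnegative. *)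
Lemma bil_ge_kgrad (x : 'cV[R]_n) l : nonneg_vec x ->
  \sum_l' x (k l') 0 * kgrad l l' <= bil A x (u l).
Proof.
move=> x_ge0; rewrite bilE (bigID (mem (k @: 'I_m))) /= -[X in X <= _]addr0.
apply: lerD; last first.
  by apply: sumr_ge0 => i _; rewrite mulr_ge0 ?(zero_gradient _ copA (u_zero l)).1.
rewrite big_imset /=; last by move=> ? ? _ _ /(k_inj u_inj).
by under [X in _ <= X]eq_bigl do rewrite inE.
Qed.

Section Decomposition.
Variable v : 'cV[R]_n.
Hypothesis v_zero : is_zero_of A v.
Hypothesis v_supp : supp v \subset I :|: [set k l | l in 'I_m].

Definition coef l : R := v (k l) 0.
Definition comb : 'cV[R]_n := \sum_l coef l *: u l.

Lemma coef_ge0 l : 0 <= coef l.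
Proof. by case: v_zero => /(_ (k l)). Qed.

Lemma combE i : comb i 0 = \sum_l coef l * u l i 0.
Proof. by rewrite summxE; apply: eq_bigr => l _; rewrite mxE. Qed.

Lemma comb_at_k l : comb (k l) 0 = coef l.
Proof.
rewrite combE (bigD1 l) //= u_at_k eqxx mulr1 big1 ?addr0 // => l' /negbTE nl'.
by rewrite u_at_k nl' mulr0.
Qed.

Lemma comb_off_block : supported_in I (v - comb).
Proof.
move=> i iI; rewrite !mxE; apply/eqP; rewrite subr_eq0; apply/eqP.
have [l /eqP ->|no_k] := pickP (fun l => i == k l).
  by rewrite comb_at_k.
rewrite combE big1; last by move=> l _; rewrite u_vanish ?no_k ?mulr0.
apply/eqP; apply: contraT => vi; have := subsetP v_supp i; rewrite inE => /(_ vi).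
rewrite in_setU (negbTE iI) => /imsetP [l _ eil].
by have := no_k l; rewrite eil eqxx.
Qed.

(* v = sum_l v_(k^l) u^l: writing T = sum_l sum_l' v_(k^l) v_(k^l') (A u^l)_(k^l'),
   one has w^T A w <= 2 T <= 2 w^T A v for the expansion w, hence
   (v-w)^T A (v-w) <= 0 with v - w supported in I. *)
Lemma decomposition : v = comb.
Proof.
case: v_zero => v_ge0 [_ qv0].
apply/eqP; rewrite -subr_eq0; apply/eqP; apply: posdef_block_eq0 pdAI comb_off_block _.
set T := \sum_l coef l * \sum_l' coef l' * kgrad l l'.
have qw_le : qform A comb <= T *+ 2 by apply: qform_comb_le coef_ge0.
have T_le : T <= bil A comb v.
  rewrite /comb bil_suml; apply: ler_sum => l _; rewrite ler_wpM2l ?coef_ge0 //.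
  by rewrite bil_sym ?copA.1 //; apply: bil_ge_kgrad.
by rewrite qformB ?copA.1 // qv0; lra.
Qed.

Lemma minimal_multiple : minimal_zero A v -> exists l (a : R), 0 < a /\ v = a *: u l.
Proof.
move=> [_ v_min]; case: v_zero => _ [v_neq0 _].
have [l coef_neq0] : exists l, coef l != 0.
  case: (pickP (fun l => coef l != 0)) => [l ?|coef0]; first by exists l.
  move: v_neq0; rewrite decomposition /comb big1 ?eqxx // => l _.
  by move/negbFE/eqP: (coef0 l) => ->; rewrite scale0r.
have coef_gt0 : 0 < coef l by rewrite lt_def coef_neq0 coef_ge0.
have supp_uv : supp (u l) \subset supp v.
  apply/subsetP => i; rewrite !inE => uli; rewrite decomposition combE.
  rewrite (bigD1 l) //= gt_eqF //; apply: ltr_pwDl.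
    by rewrite mulr_gt0 // lt_def uli u_ge0.
  by apply: sumr_ge0 => l' _; rewrite mulr_ge0 ?coef_ge0 ?u_ge0.
have supp_eq : supp (u l) = supp v.
  by case: (eqVproper supp_uv) => // ?; case: v_min; exists (u l); split.
exists l, (coef l); split=> //; rewrite {1}decomposition /comb (bigD1 l) //=.
rewrite big1 ?addr0 // => l' nl'; suff -> : coef l' = 0 by rewrite scale0r.
have : k l' \notin supp v by rewrite -supp_eq inE u_at_k (eq_sym l) (negbTE nl') eqxx.
by rewrite inE negbK => /eqP.
Qed.

End Decomposition.

End ZeroChain.
Arguments k_inj {R n m A I u k}.
Arguments u_minimal {R n m A I u k}.
Arguments coef {R n m} k v.
Arguments coef_ge0 {R n m A k v}.
Arguments decomposition {R n m A I u k} _ _ _ _ _ _ _ {v}.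
Arguments minimal_multiple {R n m A I u k} _ _ _ _ _ _ _ {v}.

Theorem theorem3p12 (R : realFieldType) (n m : nat) (A : 'M[R]_n)
  (I : {set 'I_n}) (u : 'I_m -> 'cV[R]_n) (k : 'I_m -> 'I_n) :
  copositive A ->
  posdef (principal_submx A I) ->
  (forall l, is_zero_of A (u l)) ->
  (forall l, supp (u l) :\: I = [set k l]) ->
  (forall l, u l (k l) 0 = 1) ->
  injective u ->
  (forall r s : 'I_m, val s = (val r).+1 ->
     supp_sub (u r) I \subset supp_sub (u s) I) ->
  injective k /\
  (forall l, minimal_zero A (u l)) /\
  (forall v : 'cV[R]_n, is_zero_of A v ->
     supp v \subset I :|: [set k l | l in 'I_m] ->
     (exists alpha : 'I_m -> R,
        (forall i, 0 <= alpha i) /\ v = \sum_(i < m) alpha i *: u i) /\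
     (minimal_zero A v ->
        exists (l : 'I_m) (a : R), 0 < a /\ v = a *: u l)).
Proof.
move=> copA pdAI u_zero u_supp u_k u_inj u_chain.
split; first exact: (k_inj copA pdAI u_zero u_supp u_k u_chain u_inj).
split=> [l|v v_zero v_supp]; first exact: (u_minimal copA pdAI u_zero u_supp u_k).
split; last exact: (minimal_multiple copA pdAI u_zero u_supp u_k u_chain u_inj v_zero v_supp).
exists (coef k v); split; first exact: (coef_ge0 v_zero).
by rewrite {1}(decomposition copA pdAI u_zero u_supp u_k u_chain u_inj v_zero v_supp).
Qed.
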